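(* Let $0<p<1$ and let $\mathcal O(D_p)$ be the universal complex $*$-algebra generated by one element $x$ subject to $x^*x-pxx^*=1-p$. Put $X:=1-xx^*$, and for $n\in\mathbb N$ write $x^{-n}:=(x^* )^n$. Then for every $\mu\in\mathbb Z$, $$x^\mu x^{-\mu}=1+\mathcal Q^p_\mu(X).$$
   Context: For real $r>0$ and $n\ge1$, $Q^r_n(Y)=\sum_{m=1}^n(-1)^m r^{-nm+\frac{m(m+1)}{2}}\binom{n}{m}_{r}Y^m$, where $[0]_r=0$, $[n]_r=1+r+\dots+r^{n-1}$, $[n]_r!=[1]_r\cdots[n]_r$, $[0]_r!=1$, $\binom{n}{m}_r=\frac{[n]_r!}{[m]_r![n-m]_r!}$. For $\mu\in\mathbb Z$ define $\mathcal Q^p_\mu(Y)=Q^p_\mu(Y)$ if $\mu>0$, $\mathcal Q^p_0=0$, and $\mathcal Q^p_\mu(Y)=Q^{p^{-1}}_{-\mu}(pY)$ if $\mu<0$. *)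

From HB Require Import structures.
From mathcomp Require Import all_boot all_order all_algebra.
From mathcomp Require Import complex.
From mathcomp Require Import reals.
Set Implicit Arguments. Unset Strict Implicit. Unset Printing Implicit Defensive.
Import Order.TTheory GRing.Theory Num.Theory.
Local Open Scope ring_scope.

Record star_structure (R : realType) (A : algType R[i]) := StarStructure {
  star : A -> A;
  star_invol : forall a, star (star a) = a;
  star_add : forall a b, star (a + b) = star a + star b;
  star_mul : forall a b, star (a * b) = star b * star a;
  star_scale : forall (c : R[i]) a, star (c *: a) = (conjc c) *: star a
}.

Definition qint (F : fieldType) (r : F) (n : nat) : F := \sum_(i < n) r ^+ i.
Definition qfact (F : fieldType) (r : F) (n : nat) : F := \prod_(1 <= i < n.+1) qint r i.
Definition qbinom (F : fieldType) (r : F) (n m : nat) : F :=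
  qfact r n / (qfact r m * qfact r (n - m)).

Definition Qpoly (F : fieldType) (r : F) (n : nat) : {poly F} :=
  \sum_(1 <= m < n.+1)
     ((-1) ^+ m * r ^ (- (n * m)%:Z + ((m * m.+1) %/ 2)%:Z) * qbinom r n m) *: 'X^m.

Definition calQ (F : fieldType) (p : F) (mu : int) : {poly F} :=
  match mu with
  | Posz 0 => 0
  | Posz n => Qpoly p n
  | Negz k => (Qpoly p^-1 k.+1) \Po (p *: 'X)   (* mu = -(k+1) < 0 *)
  end.

Definition spow (R : realType) (A : algType R[i]) (s : star_structure A)
  (x : A) (mu : int) : A :=
  match mu with
  | Posz n => x ^+ n
  | Negz k => (star s x) ^+ k.+1
  end.

From HB Require Import structures.
From mathcomp Require Import all_boot all_order all_algebra.
From mathcomp Require Import complex.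
From mathcomp Require Import reals.
From mathcomp Require Import ring zify.
Import Order.TTheory GRing.Theory Num.Theory.
Local Open Scope ring_scope.

(* The relation says that X := 1 - x x^* satisfies X x = p x X, so X moves past
   x^n at the cost of p^n.  Peeling one factor of x x^* = 1 - X at a time gives
   x^n x^{*n} = prod_{k<n} (1 - p^{-k} X) and x^{*n} x^n = prod_{k<n} (1 - p^{k+1} X),
   and the q-binomial theorem expands the first product as 1 + Q^p_n(X); the
   second one is 1 + Q^{1/p}_n(pX) by the same expansion with 1/p in place of p. *)

Definition Qexp (n m : nat) : int := - (n * m)%:Z + ((m * m.+1) %/ 2)%:Z.

Lemma divn2_mulSS m : ((m.+1 * m.+2) %/ 2 = (m * m.+1) %/ 2 + m.+1)%N.
Proof.
have -> : (m.+1 * m.+2 = m * m.+1 + m.+1 * 2)%N by ring.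
by rewrite divnDMl.
Qed.

Lemma QexpS n m : Qexp n m.+1 = Qexp n.+1 m.+1 + m.+1%:Z.
Proof. rewrite /Qexp divn2_mulSS; lia. Qed.

Lemma QexpSS n m : - n%:Z + Qexp n m = Qexp n.+1 m.+1.
Proof. rewrite /Qexp divn2_mulSS; lia. Qed.

Section QBinomialTheorem.
Variables (F : fieldType) (r : F).
Hypothesis r_neq0 : r != 0.
Hypothesis qint_neq0 : forall i, (0 < i)%N -> qint r i != 0.

Lemma qintD a b :
  qint r (a + b) = qint r a + r ^+ a * qint r b.
Proof.
rewrite /qint big_split_ord /= mulr_sumr; congr (_ + _).
by apply: eq_bigr => i _; rewrite exprD.
Qed.

Lemma qfact0 : qfact r 0 = 1.
Proof. by rewrite /qfact big_geq. Qed.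

Lemma qfactS n : qfact r n.+1 = qfact r n * qint r n.+1.
Proof. by rewrite /qfact big_nat_recr. Qed.

Lemma qfact_neq0 n : qfact r n != 0.
Proof.
elim: n => [|n IHn]; first by rewrite qfact0 oner_neq0.
by rewrite qfactS mulf_neq0 ?qint_neq0.
Qed.

Lemma qbinomn0 n : qbinom r n 0 = 1.
Proof. by rewrite /qbinom qfact0 mul1r subn0 divff ?qfact_neq0. Qed.

Lemma qbinomnn n : qbinom r n n = 1.
Proof. by rewrite /qbinom subnn qfact0 mulr1 divff ?qfact_neq0. Qed.

Lemma qbinomSS n m : (m < n)%N ->
  qbinom r n.+1 m.+1 = r ^+ m.+1 * qbinom r n m.+1 + qbinom r n m.
Proof.
move=> lt_mn; have [j ->] : exists j, n = (j + m.+1)%N.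
  by exists (n - m.+1)%N; rewrite subnK.
rewrite /qbinom.
have -> : ((j + m.+1).+1 - m.+1 = j.+1)%N by lia.
have -> : ((j + m.+1) - m.+1 = j)%N by lia.
have -> : ((j + m.+1) - m = j.+1)%N by lia.
rewrite (qfactS (j + m.+1)) (qfactS m) (qfactS j).
have -> : ((j + m.+1).+1 = m.+1 + j.+1)%N by lia.
rewrite qintD.
by field; rewrite !qfact_neq0 !qint_neq0.
Qed.

Lemma expr_QexpS n m : r ^ Qexp n m.+1 = r ^ Qexp n.+1 m.+1 * r ^+ m.+1.
Proof. by rewrite QexpS expfzDr. Qed.

Lemma expr_QexpSS n m : r ^ Qexp n.+1 m.+1 = r ^ (- n%:Z) * r ^ Qexp n m.
Proof. by rewrite -QexpSS expfzDr. Qed.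

Definition Qcoef n m := (-1) ^+ m * r ^ Qexp n m * qbinom r n m.

Lemma Qcoefn0 n : Qcoef n 0 = 1.
Proof. by rewrite /Qcoef /Qexp muln0 qbinomn0 expr0z !mulr1. Qed.

Lemma QcoefSS n m : (m < n)%N ->
  Qcoef n.+1 m.+1 = Qcoef n m.+1 - r ^ (- n%:Z) * Qcoef n m.
Proof.
move=> lt_mn; rewrite /Qcoef qbinomSS // (expr_QexpS n m) (expr_QexpSS n m).
by rewrite !exprS; ring.
Qed.

Lemma QcoefSnn n : Qcoef n.+1 n.+1 = - (r ^ (- n%:Z) * Qcoef n n).
Proof. by rewrite /Qcoef !qbinomnn expr_QexpSS exprS; ring. Qed.

Lemma Qpoly_coef n : 1 + Qpoly r n = \poly_(m < n.+1) Qcoef n m.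
Proof.
rewrite poly_def -(big_mkord xpredT (fun m => Qcoef n m *: 'X^m)) big_ltn //.
by rewrite Qcoefn0 scale1r.
Qed.

Lemma Qcoef_polyS n :
  \poly_(m < n.+2) Qcoef n.+1 m =
  (1 - r ^ (- n%:Z) *: 'X) * \poly_(m < n.+1) Qcoef n m.
Proof.
apply/polyP => i; rewrite mulrBl mul1r -scalerAl coefB coefZ coefXM !coef_poly.
case: i => [|m] /=; first by rewrite !Qcoefn0 mulr0 subr0.
rewrite !ltnS; case: (ltngtP m n) => [lt_mn|lt_nm|->].
- by rewrite QcoefSS // (ltnW lt_mn).
- by rewrite mulr0 subr0.
- by rewrite QcoefSnn sub0r.
Qed.

Theorem Qpoly_prod n : 1 + Qpoly r n = \prod_(k < n) (1 - r ^ (- k%:Z) *: 'X).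
Proof.
rewrite Qpoly_coef; elim: n => [|n IHn].
  by rewrite big_ord0 poly_def big_ord1 Qcoefn0 expr0 scale1r.
by rewrite Qcoef_polyS IHn big_ord_recr /= mulrC.
Qed.

End QBinomialTheorem.

Lemma horner_alg_1subZX {F : fieldType} {A : algType F} (a : A) (c : F) :
  horner_alg a (1 - c *: 'X) = 1 - c *: a.
Proof.
by rewrite rmorphB rmorph1 -mul_polyC rmorphM /= horner_algC horner_algX mulr_algl.
Qed.

Lemma comp_poly_prod_1subZX {F : fieldType} (c : nat -> F) (q : {poly F}) n :
  (\prod_(k < n) (1 - c k *: 'X)) \Po q = \prod_(k < n) (1 - c k *: q).
Proof.
rewrite rmorph_prod /=.
by apply: eq_bigr => k _; rewrite comp_polyB comp_polyC comp_polyZ comp_polyX.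
Qed.

Section Commutation.
Context {F : fieldType} {A : algType F} {x xs X : A} {r : F}.
Hypothesis r_neq0 : r != 0.
Hypothesis x_mulxs : x * xs = 1 - X.
Hypothesis xs_mulx : xs * x = 1 - r *: X.

Lemma X_mulx : X * x = r *: (x * X).
Proof.
have X_def : X = 1 - x * xs by rewrite x_mulxs subKr.
rewrite {1}X_def mulrBl mul1r -mulrA xs_mulx mulrBr mulr1 opprB addrC subrK.
by rewrite -scalerAr.
Qed.

Lemma X_mul_expx n : X * x ^+ n = r ^+ n *: (x ^+ n * X).
Proof.
elim: n => [|n IHn]; first by rewrite expr0 mulr1 mul1r scale1r.
rewrite exprSr mulrA IHn -scalerAl -(mulrA (x ^+ n) X x) X_mulx -scalerAr scalerA mulrA.
by rewrite -!exprSr.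
Qed.

Lemma expx_mul_expxs n :
  x ^+ n * xs ^+ n = horner_alg X (\prod_(k < n) (1 - r ^ (- k%:Z) *: 'X)).
Proof.
elim: n => [|n IHn]; first by rewrite !expr0 mulr1 big_ord0 rmorph1.
rewrite big_ord_recr /= mulrC rmorphM /= horner_alg_1subZX -IHn.
rewrite exprSr exprS mulrA -(mulrA (x ^+ n)) x_mulxs mulrBr mulr1 mulrBl.
have -> : x ^+ n * X = (r ^+ n)^-1 *: (X * x ^+ n).
  by rewrite X_mul_expx scalerA mulVf ?expf_neq0 // scale1r.
by rewrite exprnN mulrBl mul1r -!scalerAl mulrA.
Qed.

Lemma expxs_mul_expx n :
  xs ^+ n * x ^+ n = horner_alg X (\prod_(k < n) (1 - r ^+ k.+1 *: 'X)).
Proof.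
elim: n => [|n IHn]; first by rewrite !expr0 mulr1 big_ord0 rmorph1.
rewrite big_ord_recr /= rmorphM /= horner_alg_1subZX -IHn.
rewrite [xs ^+ n.+1]exprSr [x ^+ n.+1]exprS mulrA -(mulrA (xs ^+ n)) xs_mulx.
rewrite mulrBr mulr1 mulrBl -!scalerAr -!scalerAl -mulrA X_mul_expx.
by rewrite -!scalerAr scalerA mulrA mulrBr mulr1 -scalerAr exprS.
Qed.

End Commutation.

Lemma qint_real_neq0 {R : realType} {c : R} :
  0 < c -> forall n, (0 < n)%N -> qint (c%:C)%C n != 0.
Proof.
move=> c_gt0 [//|n] _.
rewrite /qint; under eq_bigr do rewrite -rmorphXn.
rewrite -rmorph_sum fmorph_eq0 gt_eqF //.
rewrite big_ord_recl expr0 ltr_pwDl // sumr_ge0 // => k _.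
by rewrite exprn_ge0 // ltW.
Qed.

Theorem mainTheorem5 (R : realType) (A : algType R[i]) (s : star_structure A)
  (p : R) (x : A) :
  0 < p < 1 ->
  star s x * x - (p%:C)%C *: (x * star s x) = ((1 - p)%:C)%C *: 1 ->
  forall mu : int,
    spow s x mu * spow s x (- mu) =
    1 + horner_alg (1 - x * star s x) (calQ (p%:C)%C mu).
Proof.
move=> /andP [p_gt0 _] rel; set r := (p%:C)%C; set X := 1 - x * star s x.
have r_neq0 : r != 0 by rewrite fmorph_eq0 gt_eqF.
have x_mulxs : x * star s x = 1 - X by rewrite /X subKr.
have xs_mulx : star s x * x = 1 - r *: X.
  move/eqP: rel; rewrite subr_eq => /eqP ->; rewrite rmorphB rmorph1.
  by rewrite x_mulxs scalerBr scalerBl scale1r addrA subrK.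
have hornerD1 q : 1 + horner_alg X q = horner_alg X (1 + q).
  by rewrite rmorphD rmorph1.
case=> [[|n]|k] /=.
- by rewrite expr0 mulr1 rmorph0 addr0.
- rewrite hornerD1 (Qpoly_prod _ _ r_neq0 (qint_real_neq0 p_gt0)).
  exact: expx_mul_expxs.
- have qintV_neq0 j : (0 < j)%N -> qint r^-1 j != 0.
    by rewrite /r -fmorphV; apply: qint_real_neq0; rewrite invr_gt0.
  rewrite hornerD1 -[1 + _]/(1%:P + _) -(comp_polyC 1 (r *: 'X)) -comp_polyD.
  rewrite (Qpoly_prod _ _ (invr_neq0 r_neq0) qintV_neq0).
  rewrite (comp_poly_prod_1subZX (fun k : nat => r^-1 ^ (- k%:Z))).
  rewrite (expxs_mul_expx x_mulxs xs_mulx).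
  congr horner_alg; apply: eq_bigr => j _.
  by rewrite scalerA -exprnN exprVn invrK -exprSr.
Qed.
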